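(* Let $k$ be a field, $V$ a finite-dimensional $k$-vector space, $A$ a finite arrangement of linear hyperplanes in $V$ with intersection lattice $L$ and natural sheaf $F$, and let $\widetilde L$ be the Boolean cover of $L$. Then $$\chi_q\,\mathrm{HC}_*(\widetilde L;\Lambda^\bullet F)=\chi_L(1+q).$$
   Context: $L$ consists of all intersections of subsets of $A$ (empty intersection $=V$), ordered by reverse inclusion, with minimum $\mathbf{0}=V$; atoms are the hyperplanes. Möbius function: $\mu_L(x,x)=1$, $\mu_L(x,y)=-\sum_{x\le z<y}\mu_L(x,z)$; $\chi_L(t)=\sum_{x\in L}\mu_L(\mathbf{0},x)t^{\dim x}$. A sheaf assigns a vector space $G(x)$ to each element and a linear map $G^y_x:G(y)\to G(x)$ to each $x\le y$, functorially. Natural sheaf: $F(x)=x$, $F^y_x$ the inclusion $y\subseteq x$; $\Lambda^jF$ has $(\Lambda^jF)(x)=\Lambda^j(F(x))$, maps $\Lambda^j(F^y_x)$; $\Lambda^\bullet F=\bigoplus_{j\ge0}\Lambda^jF$. Graded Euler characteristic: $\chi_q\,\mathrm{HC}_*(\widetilde L;\Lambda^\bullet F)=\sum_{k\ge0}q^k\sum_n(-1)^n\dim\mathrm{HC}_n(\widetilde L;\Lambda^kF)$. Boolean cover: $\widetilde L$ is the lattice of subsets of $A$ under inclusion, $f(S)=\bigcap_{a\in S}a$, induced sheaf $G(S)=G(f(S))$ with maps $G^{f(T)}_{f(S)}$. Cellular homology of a Boolean lattice of subsets of $\{a_1,\dots,a_n\}$ with sheaf $G$: homology of $C_k=\bigoplus_{|x|=k}G(x)$,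 $d=\sum\varepsilon^x_yG^x_y$ over $y\subset x$, $|y|=|x|-1$, with $\varepsilon^x_y=(-1)^{j-1}$ when $x=\{a_{i_1},\dots,a_{i_k}\}$ ($i_1<\cdots<i_k$), $y=x\setminus\{a_{i_j}\}$. *)

From HB Require Import structures.
From mathcomp Require Import all_boot all_order all_algebra.
Set Implicit Arguments. Unset Strict Implicit. Unset Printing Implicit Defensive.
Import GRing.Theory.
Local Open Scope ring_scope.

Section Arrangement.
Variables (k : fieldType) (V : vectType k).
Local Notation d := (\dim {:V}).

Definition fS n (H : 'I_n -> {vspace V}) (X : {set 'I_n}) : {vspace V} :=
  (\bigcap_(i in X) H i)%VS.

(* Model of exterior powers: Lambda^j(V) is embedded in the j-th tensor power
   V^{(x) j} (coordinates w.r.t. the basis vbasis {:V}) by antisymmetrization;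
   v_1 /\ ... /\ v_j has coordinate det[coord_{h b}(v_a)] at e_{h 1} (x)...(x) e_{h j}. *)
Definition ExtT (j : nat) := {ffun {ffun 'I_j -> 'I_d} -> k^o}.

Definition wedge j (vs : 'I_j -> V) : ExtT j :=
  [ffun h : {ffun 'I_j -> 'I_d} => \det (\matrix_(a < j, b < j) coord (vbasis {:V}) (h b) (vs a))].

(* Lambda^j(W) for a subspace W, realized inside Lambda^j(V): the span of wedges
   of vectors of W (spanned by wedges of basis vectors of W).  With this model the
   maps Lambda^j(F^y_x) induced by inclusions y <= x are inclusions. *)
Definition Ext j (W : {vspace V}) : {vspace ExtT j} :=
  (\sum_(g : {ffun 'I_j -> 'I_(\dim W)})
      <[wedge (fun a => tnth (vbasis W) (g a))]>)%VS.

(* Ambient space for the cellular chains on the Boolean lattice of subsets of A *)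
Definition ChainT n j := {ffun {set 'I_n} -> ExtT j}.

Definition ins n j (S0 : {set 'I_n}) : 'Hom(ExtT j, ChainT n j) :=
  linfun (fun t : ExtT j => [ffun Y : {set 'I_n} => if Y == S0 then t else 0] : ChainT n j).

Definition chains n (H : 'I_n -> {vspace V}) j m : {vspace ChainT n j} :=
  (\sum_(X : {set 'I_n} | #|X| == m) (ins j X @: Ext j (fS H X)))%VS.

(* cellular differential: d = sum eps^x_y G^x_y, where for x = y u {a_i},
   eps^x_y = (-1)^(position of a_i in x, minus 1) = (-1)^#{l in y | l < i} *)
Definition bdry n j : 'End(ChainT n j) :=
  linfun (fun c : ChainT n j =>
    [ffun Y : {set 'I_n} => \sum_(i : 'I_n | i \notin Y)
                 ((-1) ^+ #|[set l in Y | (l < i)%N]|) *: c (i |: Y)] : ChainT n j).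

Definition HCdim n (H : 'I_n -> {vspace V}) j m : nat :=
  (\dim (chains H j m :&: lker (bdry n j))%VS - \dim (bdry n j @: chains H j m.+1)%VS)%N.

(* sum_m (-1)^m dim HC_m(L~; Lambda^j F)  (C_m = 0 for m > n) *)
Definition euler n (H : 'I_n -> {vspace V}) j : int :=
  \sum_(m < n.+1) (-1) ^+ m * (HCdim H j m)%:Z.

Definition latt n (H : 'I_n -> {vspace V}) : seq {vspace V} :=
  undup [seq fS H X | X : {set 'I_n}].

(* mu_L(0, y), 0 = V, order = reverse inclusion:
   mu(0,0)=1, mu(0,y) = - sum_{z in L, 0 <= z < y} mu(0,z), i.e. y strictly inside z.
   The fuel d.+1 suffices since dimension strictly increases along the recursion. *)
Fixpoint mob_aux (L : seq {vspace V}) (fuel : nat) (y : {vspace V}) : int :=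
  match fuel with
  | 0 => 0
  | f.+1 => if y == fullv then 1
            else - \sum_(z <- L | (y <= z)%VS && (z != y)) mob_aux L f z
  end.

Definition mobius n (H : 'I_n -> {vspace V}) (y : {vspace V}) : int :=
  mob_aux (latt H) d.+1 y.

Definition chiL n (H : 'I_n -> {vspace V}) : {poly int} :=
  \sum_(x <- latt H) (mobius H x)%:P * 'X^(\dim x).

End Arrangement.

(* The Euler characteristic of a finite chain complex is the alternating sum of the
   dimensions of its chain spaces.  Here C_m is the direct sum of the spaces
   Lambda^j f(S) over the subsets S of A of size m, and Lambda^j W has dimension
   binom(dim W, j): the wedges of basis vectors indexed by increasing j-tuples span
   it, and they are independent because, written against coordinates of V that are
   dual to a basis of W, they form a unit matrix.  Grouping the subsets S by the
   flat x = f(S) turns the Euler characteristic into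
   sum_x nu(x) binom(dim x, j) with nu(x) = sum_(f(S) = x) (-1)^|S|.
   Whitney's formula nu(x) = mu(V, x) holds because, for a flat y <> V, the S with
   y <= f(S) are exactly the subsets of the nonempty set of hyperplanes containing y,
   so sum_(y <= z) nu(z) = 0, which is the Mobius recursion.  Finally
   chi_L(1 + q) = sum_x mu(V, x) (1 + q)^(dim x) has q^j-coefficient
   sum_x mu(V, x) binom(dim x, j). *)

From HB Require Import structures.
From mathcomp Require Import all_boot all_order all_algebra perm.
From mathcomp Require Import ring.
Set Implicit Arguments. Unset Strict Implicit. Unset Printing Implicit Defensive.
Import GRing.Theory.
Local Open Scope ring_scope.

Lemma det_mulmx_rowsub (R : comPzRingType) j m (A : 'M[R]_(j, m)) (B : 'M[R]_(m, j)) :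
  \det (A *m B) =
  \sum_(g : {ffun 'I_j -> 'I_m}) (\prod_a A a (g a)) * \det (rowsub g B).
Proof.
rewrite /determinant.
under eq_bigr => s _.
  rewrite (eq_bigr (fun a => \sum_c A a c * B c (s a))); last by move=> a _; rewrite mxE.
  rewrite bigA_distr_bigA big_distrr /=.
  over.
rewrite exchange_big /=; apply: eq_bigr => g _.
rewrite big_distrr /=; apply: eq_bigr => s _.
rewrite big_split /= mulrCA; congr (_ * (_ * _)).
by apply: eq_bigr => a _; rewrite mxE.
Qed.

Definition sorted_tuples j r := [set t : j.-tuple 'I_r | sorted ltn (map val t)].

Lemma sorted_tuple_uniq j r (t : j.-tuple 'I_r) : t \in sorted_tuples j r -> uniq t.
Proof.
by rewrite inE => /(sorted_uniq ltn_trans ltnn); rewrite (map_inj_uniq val_inj).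
Qed.

Lemma sorted_tuple_subset_eq j r (t t' : j.-tuple 'I_r) :
  t \in sorted_tuples j r -> t' \in sorted_tuples j r -> {subset t <= t'} -> t = t'.
Proof.
move=> st st' tt'.
have size_tt' : (size t' <= size t)%N by rewrite !size_tuple.
have [_ eq_tt'] := uniq_min_size (sorted_tuple_uniq st) tt' size_tt'.
move: st st'; rewrite !inE !sorted_map => st st'.
have ltn_ord_trans : transitive (fun x y : 'I_r => x < y)%N.
  by move=> y x z; apply: ltn_trans.
exact/val_inj/(irr_sorted_eq ltn_ord_trans (fun x => ltnn x) st st' eq_tt').
Qed.

Lemma det_eq_sorted_tuples (R : comNzRingType) j r (t t' : j.-tuple 'I_r) :
    t \in sorted_tuples j r -> t' \in sorted_tuples j r ->
  \det (\matrix_(a, b) (tnth t a == tnth t' b)%:R : 'M[R]_j) = (t == t')%:R.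
Proof.
move=> st st'; have [<-|tt'] := eqVneq t t'.
  have /tuple_uniqP t_inj := sorted_tuple_uniq st.
  rewrite -[true%:R](det1 R j); congr (\det _); apply/matrixP => a b.
  by rewrite !mxE (inj_eq t_inj).
have [a ta] : exists a, tnth t a \notin t'.
  apply/existsP; apply: contraR tt' => /existsPn t_t'.
  apply/eqP/sorted_tuple_subset_eq => // _ /tnthP[a ->].
  exact/negbNE/t_t'.
rewrite (expand_det_row _ a) big1 // => b _; rewrite !mxE.
by case: eqP ta => [->|_]; rewrite ?mem_tnth ?mul0r.
Qed.

Section Exterior.
Variables (k : fieldType) (V : vectType k).
Local Notation e := (vbasis {:V}).

Lemma wedgeE j (vs : 'I_j -> V) h :
  wedge vs h = \det (\matrix_(a, b) coord e (h b) (vs a)).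
Proof. by rewrite ffunE. Qed.

Lemma eq_wedge j (vs ws : 'I_j -> V) : vs =1 ws -> wedge vs = wedge ws.
Proof.
move=> eq_vw; apply/ffunP => h; rewrite !wedgeE; congr (\det _).
by apply/matrixP => a b; rewrite !mxE eq_vw.
Qed.

Lemma wedge_sum j m (al : 'I_j -> 'I_m -> k) (w : 'I_m -> V) :
  wedge (fun a => \sum_c al a c *: w c) =
  \sum_(g : {ffun 'I_j -> 'I_m}) (\prod_a al a (g a)) *: wedge (fun a => w (g a)).
Proof.
apply/ffunP => h; rewrite sum_ffunE wedgeE.
rewrite (_ : \matrix_(a, b) _ =
             \matrix_(a, c) al a c *m \matrix_(c, b) coord e (h b) (w c)).
  rewrite det_mulmx_rowsub; apply: eq_bigr => g _; rewrite ffunE wedgeE.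
  have -> : rowsub g (\matrix_(c, b) coord e (h b) (w c)) =
            \matrix_(a, b) coord e (h b) (w (g a)) by apply/matrixP => a b; rewrite !mxE.
  by under eq_bigr do rewrite mxE.
apply/matrixP => a b; rewrite !mxE linear_sum; apply: eq_bigr => c _.
by rewrite linearZ !mxE.
Qed.

Lemma wedge_perm j (vs : 'I_j -> V) (p : 'S_j) :
  wedge (fun a => vs (p a)) = (-1) ^+ p *: wedge vs.
Proof.
apply/ffunP => h; rewrite !ffunE /=.
transitivity (\det (perm_mx (R := k) p) * \det (\matrix_(a, b) coord e (h b) (vs a)));
  last by rewrite det_perm.
rewrite -det_mulmx -row_permE.
by congr (\det _); apply/matrixP => a b; rewrite !mxE.
Qed.

Lemma wedge_eq0 j (vs : 'I_j -> V) a1 a2 : a1 != a2 -> vs a1 = vs a2 -> wedge vs = 0.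
Proof.
move=> a12 vs12; apply/ffunP => h; rewrite !ffunE.
by apply: (determinant_alternate a12) => b; rewrite !mxE vs12.
Qed.

Lemma wedge_in_Ext j (W : {vspace V}) (vs : 'I_j -> V) :
  (forall a, vs a \in W) -> wedge vs \in Ext j W.
Proof.
move=> vsW.
have vsE a : vs a = \sum_(c < \dim W) coord (vbasis W) c (vs a) *: (vbasis W)`_c.
  exact: coord_vbasis.
rewrite (eq_wedge vsE) wedge_sum; apply: memv_suml => g _; apply: memvZ.
apply: (sumv_sup g) => //; rewrite -memvE.
rewrite (@eq_wedge _ _ (fun a => tnth (vbasis W) (g a))) ?memv_line // => a.
by rewrite (tnth_nth 0).
Qed.

Lemma ExtS j (W W' : {vspace V}) : (W <= W')%VS -> (Ext j W <= Ext j W')%VS.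
Proof.
move=> sWW'; apply/subv_sumP => g _; rewrite -memvE; apply: wedge_in_Ext => a.
by apply: (subvP sWW'); apply: vbasis_mem; apply: mem_tnth.
Qed.

Lemma wedge_in_sorted_span j r (vs : 'I_r -> V) (g : 'I_j -> 'I_r) :
  wedge (fun a => vs (g a)) \in
    (\sum_(t in sorted_tuples j r) <[wedge (fun a => vs (tnth t a))]>)%VS.
Proof.
have [g_inj|] := boolP (injectiveb g); last first.
  by case/injectivePn => a1 [a2 a12 g12]; rewrite (wedge_eq0 a12) ?mem0v ?g12.
pose t0 : j.-tuple 'I_r := [tuple g a | a < j].
pose t := sort_tuple (fun x y : 'I_r => (x <= y)%N) t0.
have /tuple_permP[p /val_inj t0E] : perm_eq t0 t by rewrite perm_sym perm_sort.
have gE a : g a = tnth t (p a).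
  by have := congr1 (fun s => tnth s a) t0E; rewrite !tnth_mktuple.
rewrite (eq_wedge (ws := fun a => vs (tnth t (p a)))) => [|a]; last by rewrite gE.
rewrite (wedge_perm (fun b => vs (tnth t b))); apply/memvZ/(sumv_sup t)/memv_line.
rewrite inE ltn_sorted_uniq_leq (map_inj_uniq val_inj) sort_uniq.
rewrite map_inj_uniq ?enum_uniq //= ?sorted_map; last exact/injectiveP.
exact: (sort_sorted (fun x y : 'I_r => leq_total x y)).
Qed.

Lemma dim_Ext_leq j (W : {vspace V}) : (\dim (Ext j W) <= 'C(\dim W, j))%N.
Proof.
pose B := (\sum_(t in sorted_tuples j (\dim W))
             <[wedge (fun a => tnth (vbasis W) (tnth t a))]>)%VS.
have sExtB : (Ext j W <= B)%VS.
  by apply/subv_sumP => g _; rewrite -memvE; apply: wedge_in_sorted_span.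
apply: leq_trans (dimvS sExtB) (leq_trans (dimv_leq_sum _ _ _) _).
rewrite -card_ltn_sorted_tuples -sum1_card.
by apply: leq_sum => t _; rewrite dim_vline leq_b1.
Qed.

Lemma coord_dual_basis (W : {vspace V}) :
  exists (p : 'I_(\dim W) -> 'I_(\dim {:V})) (w : 'I_(\dim W) -> V),
    (forall a, w a \in W) /\ (forall a b, coord e (p b) (w a) = (a == b)%:R).
Proof.
pose M : 'M[k]_(\dim W, \dim {:V}) := \matrix_(c, i) coord e i (tnth (vbasis W) c).
have M_free : row_free M.
  apply: inj_row_free => u uM0.
  pose v := \sum_(c < \dim W) u 0 c *: (vbasis W)`_c.
  have v0 : v = 0.
    rewrite (coord_vbasis (memvf v)); apply: big1 => i _.
    rewrite (_ : coord e i v = 0) ?scale0r //.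
    have /rowP/(_ i) := uM0; rewrite !mxE => <-; rewrite linear_sum.
    by apply: eq_bigr => c _; rewrite linearZ /= mxE (tnth_nth 0).
  have /freeP u0 := basis_free (vbasisP W).
  by apply/rowP => c; rewrite !mxE (u0 (fun c => u 0 c) v0).
(* p selects an invertible square minor of M and w is vbasis W transformed by its
   inverse. *)
have M_full : row_full M^T by rewrite /row_full mxrank_tr.
pose p := fullrankfun M_full.
have N_unit : (rowsub p M^T)^T \in unitmx by rewrite unitmx_tr fullrowsub_unit.
pose Q := invmx (rowsub p M^T)^T.
exists p, (fun a => \sum_c Q a c *: tnth (vbasis W) c); split.
  by move=> a; apply: memv_suml => c _; apply/memvZ/vbasis_mem/mem_tnth.
move=> a b; rewrite linear_sum /=.
have /matrixP/(_ a b) := mulVmx N_unit; rewrite !mxE => <-.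
by apply: eq_bigr => c _; rewrite linearZ /= !mxE.
Qed.

Lemma dim_Ext_geq j (W : {vspace V}) : ('C(\dim W, j) <= \dim (Ext j W))%N.
Proof.
have [p [w [wW coord_w]]] := coord_dual_basis W.
pose ST := sorted_tuples j (\dim W).
pose wt (t : j.-tuple 'I_(\dim W)) := wedge (fun a => w (tnth t a)).
pose pt (t : j.-tuple 'I_(\dim W)) : {ffun 'I_j -> 'I_(\dim {:V})} :=
  [ffun b => p (tnth t b)].
have wt_pt t t' : t \in ST -> t' \in ST -> wt t (pt t') = (t == t')%:R.
  move=> st st'; rewrite wedgeE -(det_eq_sorted_tuples k st st'); congr (\det _).
  by apply/matrixP => a b; rewrite !mxE ffunE coord_w.
pose X := [tuple wt (enum_val i) | i < #|ST|].
have X_free : free X.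
  have XE (i : 'I_#|ST|) : X`_i = wt (enum_val i) by rewrite -tnth_nth tnth_mktuple.
  apply/freeP => c Xc0 i; have := congr1 (fun f : ExtT V j => f (pt (enum_val i))) Xc0.
  rewrite sum_ffunE ffunE (bigD1 i) //= big1 => [|i' i'i].
    by rewrite ffunE XE wt_pt ?enum_valP // eqxx addr0 -{2}[c i]mulr1.
  rewrite ffunE XE wt_pt ?enum_valP //.
  by rewrite (inj_eq enum_val_inj) (negbTE i'i); exact: mulr0.
have sXExt : (<<X>> <= Ext j W)%VS.
  by apply/span_subvP => _ /tnthP[i ->]; rewrite tnth_mktuple; apply: wedge_in_Ext.
move/dimvS: sXExt; rewrite (eqnP X_free) size_tuple.
by rewrite -card_ltn_sorted_tuples.
Qed.

Lemma dim_Ext j (W : {vspace V}) : \dim (Ext j W) = 'C(\dim W, j).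
Proof. by apply/eqP; rewrite eqn_leq dim_Ext_leq dim_Ext_geq. Qed.

End Exterior.

Lemma linfun_linE (k : fieldType) (aT rT : vectType k) (f : aT -> rT) :
  linear f -> linfun f =1 f.
Proof.
move=> f_lin; exact: (lfunE (HB.pack f (GRing.isLinear.Build k aT rT *:%R f f_lin))).
Qed.

Lemma sum_antisym_pairs (R : zmodType) n (P : pred ('I_n * 'I_n)) (F : 'I_n * 'I_n -> R) :
    (forall p, P p -> P (p.2, p.1)) -> (forall p, P p -> p.1 != p.2) ->
    (forall p, P p -> F (p.2, p.1) = - F p) ->
  \sum_(p | P p) F p = 0.
Proof.
move=> P_swap P_neq F_swap.
rewrite (bigID (fun p : 'I_n * 'I_n => (p.1 < p.2)%N)) /=.
rewrite [X in _ + X](reindex_inj (h := fun p => (p.2, p.1))) => [|[? ?] [? ?] [-> ->]] //=.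
rewrite [X in _ + X](eq_bigl (fun p => P p && (p.1 < p.2)%N)) => [|[a b] /=].
  by rewrite -big_split big1 //= => p /andP[/F_swap -> _]; rewrite subrr.
apply/andP/andP => -[/P_swap Pab ab]; split => //.
  by rewrite ltn_neqAle leqNgt ab andbT val_eqE (P_neq _ Pab).
by rewrite -leqNgt ltnW.
Qed.

Section BoundarySign.
Variables (R : comPzRingType) (n : nat).

Definition bdry_sign (Y : {set 'I_n}) (i : 'I_n) : R :=
  (-1) ^+ #|[set l in Y | (l < i)%N]|.

Lemma bdry_signU1 (Y : {set 'I_n}) i l : i \notin Y ->
  bdry_sign (i |: Y) l = (if (i < l)%N then -1 else 1) * bdry_sign Y l.
Proof.
move=> iY; rewrite /bdry_sign; case: ifP => il.
  rewrite (_ : [set x in i |: Y | (x < l)%N] = i |: [set x in Y | (x < l)%N]).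
    by rewrite cardsU1 inE (negbTE iY) /= add1n exprS.
  by apply/setP => x; rewrite !inE; case: (x =P i) => [->|//]; rewrite il.
rewrite mul1r (_ : [set x in i |: Y | (x < l)%N] = [set x in Y | (x < l)%N]) //.
by apply/setP => x; rewrite !inE; case: (x =P i) => [->|//]; rewrite il (negbTE iY).
Qed.

Lemma bdry_sign_swap (Y : {set 'I_n}) i l : i != l -> i \notin Y -> l \notin Y ->
  bdry_sign Y l * bdry_sign (l |: Y) i = - (bdry_sign Y i * bdry_sign (i |: Y) l).
Proof.
move=> il iY lY; rewrite !bdry_signU1 //.
case: ltngtP => [_|_|/val_inj eq_il]; try ring.
by rewrite eq_il eqxx in il.
Qed.

End BoundarySign.

Section Chains.
Variables (k : fieldType) (V : vectType k) (n : nat) (H : 'I_n -> {vspace V}) (j : nat).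
Local Notation D := (bdry V n j).
Local Notation C := (chains H j).

Lemma insE (X : {set 'I_n}) (t : ExtT V j) :
  ins V j X t = [ffun Y => if Y == X then t else 0].
Proof.
rewrite linfun_linE // => a u v; apply/ffunP => Y; rewrite !ffunE.
by case: ifP => _; rewrite ?scaler0 ?addr0.
Qed.

Lemma lker_ins (X : {set 'I_n}) : lker (ins V j X) = 0%VS.
Proof.
apply/eqP/lker0P => t t' /(congr1 (fun c : ChainT V n j => c X)).
by rewrite !insE !ffunE eqxx.
Qed.

Lemma memv_img_ins (X : {set 'I_n}) U u Y :
  u \in (ins V j X @: U)%VS -> Y != X -> u Y = 0.
Proof. by move=> /memv_imgP [t _ ->] YX; rewrite insE ffunE (negbTE YX). Qed.

Lemma bdryE (c : ChainT V n j) Y :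
  D c Y = \sum_(i | i \notin Y) bdry_sign k Y i *: c (i |: Y).
Proof.
rewrite linfun_linE ?ffunE // => a u v; apply/ffunP => Z.
rewrite !ffunE scaler_sumr -big_split /=.
by apply: eq_bigr => i _; rewrite !ffunE scalerDr !scalerA mulrC.
Qed.

Lemma fS_antimono (X Y : {set 'I_n}) : X \subset Y -> (fS H Y <= fS H X)%VS.
Proof.
move=> sXY; apply/subv_bigcapP => i iX.
exact: (bigcapv_inf i (subsetP sXY i iX) (subvv _)).
Qed.

Lemma memv_chainsP m c :
  c \in C m <->
  (forall Y : {set 'I_n}, #|Y| != m -> c Y = 0) /\ (forall Y, c Y \in Ext j (fS H Y)).
Proof.
split=> [/memv_sumP[cs cs_in ->]|[c0 c_in]].
  have csE Y : (\sum_(X : {set 'I_n} | #|X| == m) cs X) Y =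
               if #|Y| == m then cs Y Y else 0.
    rewrite sum_ffunE; case: ifP => mY.
      rewrite (bigD1 Y) //= big1 ?addr0 // => X /andP[mX XY].
      by apply: (memv_img_ins (cs_in X mX)); rewrite eq_sym.
    apply: big1 => X mX; apply: (memv_img_ins (cs_in X mX)).
    by apply: contraFneq mY => ->.
  split=> Y; rewrite csE; first by move/negbTE ->.
  case: ifP => mY; last exact: mem0v.
  by have /memv_imgP[t t_in ->] := cs_in Y mY; rewrite insE ffunE eqxx.
have -> : c = \sum_(X : {set 'I_n} | #|X| == m) ins V j X (c X).
  apply/ffunP => Y; rewrite sum_ffunE.
  have [mY|mY] := eqVneq #|Y| m.
    rewrite (bigD1 Y) ?mY //= insE ffunE eqxx big1 ?addr0 // => X /andP[_ XY].
    by rewrite insE ffunE eq_sym (negbTE XY).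
  rewrite c0 // big1 // => X /eqP mX; rewrite insE ffunE.
  by case: eqP => // YX; rewrite YX mX eqxx in mY.
by apply: memv_sumr => X _; apply: memv_img.
Qed.

Lemma bdry_chains m : (D @: C m.+1 <= C m)%VS.
Proof.
apply/subvP => _ /memv_imgP[c /memv_chainsP[c0 c_in] ->].
apply/memv_chainsP; split=> Y.
  move=> mY; rewrite bdryE big1 // => i iY; rewrite c0 ?scaler0 //.
  by rewrite cardsU1 iY /= add1n eqSS.
rewrite bdryE; apply: memv_suml => i _; apply: memvZ.
exact: (subvP (ExtS j (fS_antimono (subsetUr [set i] Y)))).
Qed.

Lemma limg_bdry_chains0 : (D @: C 0%N = 0)%VS.
Proof.
apply/eqP; rewrite -subv0; apply/subvP => _ /memv_imgP[c /memv_chainsP[c0 _] ->].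
rewrite memv0; apply/eqP/ffunP => Y; rewrite bdryE ffunE big1 // => i iY.
by rewrite c0 ?scaler0 // cardsU1 iY.
Qed.

Lemma chains_eq0 : C n.+1 = 0%VS.
Proof.
rewrite /chains big_pred0 // => X; apply/negbTE; rewrite neq_ltn.
by rewrite (leq_ltn_trans (max_card _)) // card_ord.
Qed.

Lemma bdry_bdry c : D (D c) = 0.
Proof.
apply/ffunP => Y; rewrite bdryE ffunE.
under eq_bigr => i _ do rewrite bdryE scaler_sumr.
rewrite pair_big_dep /=; apply: sum_antisym_pairs => [[i l]|[i l]|[i l]] /=.
- by rewrite !in_setU1 !negb_or eq_sym => /andP[iY /andP[-> ->]]; rewrite iY.
- by rewrite in_setU1 negb_or eq_sym => /andP[_ /andP[]].
rewrite in_setU1 negb_or eq_sym => /andP[iY /andP[il lY]].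
by rewrite !scalerA setUCA bdry_sign_swap // scaleNr.
Qed.

End Chains.

Section EulerPoincare.
Variables (K : fieldType) (W : vectType K) (D : 'End(W)) (C : nat -> {vspace W}) (N : nat).
Hypotheses (DD : forall w, D (D w) = 0) (DC : forall m, (D @: C m.+1 <= C m)%VS).
Hypotheses (DC0 : (D @: C 0%N = 0)%VS) (CN : C N.+1 = 0%VS).

Lemma euler_poincare :
  \sum_(m < N.+1) (-1) ^+ m * (\dim (C m :&: lker D) - \dim (D @: C m.+1))%N%:Z =
  \sum_(m < N.+1) (-1) ^+ m * (\dim (C m))%:Z.
Proof.
pose I m := (\dim (D @: C m))%:Z.
have homologyE m : (\dim (C m :&: lker D) - \dim (D @: C m.+1))%N%:Z =
                   (\dim (C m))%:Z - I m - I m.+1.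
  have im_ker : (D @: C m.+1 <= C m :&: lker D)%VS.
    rewrite subv_cap DC; apply/subvP => _ /memv_imgP[c _ ->].
    by rewrite memv_ker DD.
  by rewrite -subzn ?dimvS // -(limg_ker_dim D (C m)) PoszD /I; ring.
pose u m := (-1) ^+ m * I m.
have telescope : \sum_(m < N.+1) (u m.+1 - u m) = 0.
  rewrite -(big_mkord xpredT (fun m => u m.+1 - u m)) telescope_sumr //.
  by rewrite /u /I CN DC0 limg0 !dimv0 !mulr0 subrr.
apply/eqP; rewrite -subr_eq0 -sumrB -[X in _ == X]telescope; apply/eqP.
by apply: eq_bigr => m _; rewrite homologyE /u exprS; ring.
Qed.

End EulerPoincare.

Section EulerCharacteristic.
Variables (k : fieldType) (V : vectType k) (n : nat) (H : 'I_n -> {vspace V}) (j : nat).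

Lemma euler_dim_chains :
  euler H j = \sum_(m < n.+1) (-1) ^+ m * (\dim (chains H j m))%:Z.
Proof.
apply: euler_poincare; [exact: bdry_bdry | exact: bdry_chains |
                        exact: limg_bdry_chains0 | exact: chains_eq0].
Qed.

Lemma dim_chains m :
  \dim (chains H j m) = (\sum_(X : {set 'I_n} | #|X| == m) 'C(\dim (fS H X), j))%N.
Proof.
have direct : directv (\sum_(X : {set 'I_n} | #|X| == m) (ins V j X @: Ext j (fS H X))).
  apply/directv_sum_independent => cs cs_in cs0 X mX.
  have cs_off (Z Y : {set 'I_n}) : #|Z| == m -> Y != Z -> cs Z Y = 0.
    by move=> mZ; apply: memv_img_ins (cs_in Z mZ).
  apply/ffunP => Y; rewrite ffunE; have [->|YX] := eqVneq Y X; last exact: cs_off.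
  have := congr1 (fun c : ChainT V n j => c X) cs0.
  rewrite /= sum_ffunE ffunE (bigD1 X) //= big1 ?addr0 // => Z /andP[mZ ZX].
  by apply: cs_off mZ _; rewrite eq_sym.
rewrite /chains (directvP direct) /=.
by apply: eq_bigr => X _; rewrite limg_dim_eq ?dim_Ext // lker_ins capv0.
Qed.

Lemma euler_sum_subsets :
  euler H j = \sum_(X : {set 'I_n}) (-1) ^+ #|X| * ('C(\dim (fS H X), j))%:Z.
Proof.
rewrite euler_dim_chains.
rewrite (partition_big (fun X : {set 'I_n} => inord #|X| : 'I_n.+1) xpredT) //.
apply: eq_bigr => m _; rewrite dim_chains -natz natr_sum mulr_sumr.
have card_lt (X : {set 'I_n}) : (#|X| < n.+1)%N.
  by rewrite ltnS (leq_trans (max_card _)) ?card_ord.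
apply: eq_big => [X|X /eqP <-]; last by rewrite natz.
apply/eqP/eqP => [mX|<-]; last by rewrite inordK.
by apply: val_inj; rewrite /= inordK.
Qed.

End EulerCharacteristic.

Lemma sum_subsets_sign_eq0 (R : comPzRingType) (T : finType) (A : {set T}) a :
  a \in A -> \sum_(X : {set T} | X \subset A) (-1) ^+ #|X| = 0 :> R.
Proof.
(* Expand prod_i (F i + 1), whose factor at a vanishes. *)
move=> aA; pose F i : R := if i \in A then -1 else 0.
have := @bigA_distr R 0 1 *%R +%R T F (fun=> 1).
rewrite (bigD1 a) //= {1}/F aA addNr mul0r => /esym prod_eq0.
rewrite -[RHS]prod_eq0 big_mkcond; apply: eq_bigr => X _.
case: ifPn => [XA|/subsetPn[i iX iA]].
  rewrite -prodr_const big_mkcond; apply: eq_bigr => i _.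
  by rewrite /F; case: ifP => // /(subsetP XA) ->.
by rewrite (bigD1 i) //= iX /F (negbTE iA) mul0r.
Qed.

Section Whitney.
Variables (k : fieldType) (V : vectType k) (n : nat) (H : 'I_n -> {vspace V}).

Definition whitney_mu (x : {vspace V}) : int :=
  \sum_(X : {set 'I_n} | fS H X == x) (-1) ^+ #|X|.

Lemma mem_latt X : fS H X \in latt H.
Proof. by rewrite mem_undup map_f ?mem_enum. Qed.

Lemma sum_latt_fibres (R : nmodType) (F : {set 'I_n} -> R) (P : pred {vspace V}) :
  \sum_(z <- latt H | P z) \sum_(X : {set 'I_n} | fS H X == z) F X =
  \sum_(X : {set 'I_n} | P (fS H X)) F X.
Proof.
rewrite (exchange_big_dep xpredT) //= [RHS]big_mkcond; apply: eq_bigr => X _.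
rewrite big_mkcond (bigD1_seq (fS H X)) ?mem_latt ?undup_uniq //= eqxx andbT.
by rewrite big1 ?addr0 // => z zX; rewrite eq_sym (negbTE zX) andbF.
Qed.

Lemma fS_set0 : fS H set0 = fullv.
Proof. by rewrite /fS big_pred0 // => i; rewrite in_set0. Qed.

Hypothesis H_hyp : forall i, (\dim (H i)).+1 = \dim {:V}.

Lemma fS_eq_fullv X : (fS H X == fullv) = (X == set0).
Proof.
apply/eqP/eqP => [XV|->]; last exact: fS_set0.
apply/setP => i; rewrite in_set0; apply/negbTE/negP => iX.
have /dimvS := bigcapv_inf i iX (subvv (H i)).
by rewrite -/(fS H X) XV -(H_hyp i) ltnn.
Qed.

Lemma whitney_mu_fullv : whitney_mu fullv = 1.
Proof.
by rewrite /whitney_mu (big_pred1 set0) ?cards0 // => X; rewrite /= fS_eq_fullv.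
Qed.

Lemma sum_whitney_mu_above y : y \in latt H -> y != fullv ->
  \sum_(z <- latt H | (y <= z)%VS) whitney_mu z = 0.
Proof.
rewrite mem_undup => /mapP[Y _ ->] YV; rewrite /whitney_mu sum_latt_fibres.
have [a aY] : exists a, a \in Y.
  case: (set_0Vmem Y) => [Y0|[b bY]]; last by exists b.
  by rewrite Y0 fS_set0 eqxx in YV.
pose A := [set i | (fS H Y <= H i)%VS].
rewrite (eq_bigl (fun X : {set 'I_n} => X \subset A)) => [|X].
  have aA : a \in A by rewrite inE (bigcapv_inf a aY).
  exact: sum_subsets_sign_eq0 aA.
apply/subv_bigcapP/subsetP => [YX i iX|XA i /XA]; last by rewrite inE.
by rewrite inE YX.
Qed.

Lemma mob_aux_whitney fuel y : y \in latt H -> (\dim {:V} < \dim y + fuel)%N ->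
  mob_aux (latt H) fuel y = whitney_mu y.
Proof.
elim: fuel y => [|fuel IH] y yL dim_y.
  by rewrite addn0 ltnNge dimvS ?subvf in dim_y.
rewrite /=; case: eqP => [->|/eqP yV]; first by rewrite whitney_mu_fullv.
have := sum_whitney_mu_above yL yV.
rewrite big_mkcond (bigD1_seq y) ?undup_uniq //= subvv => /eqP.
rewrite addr_eq0 => /eqP ->; congr (- _).
rewrite -big_mkcondr [RHS](eq_bigl (fun z => (y <= z)%VS && (z != y))) => [|z];
  last by rewrite andbC.
rewrite big_seq_cond [RHS]big_seq_cond; apply: eq_bigr => z /and3P[zL yz zy].
apply: IH => //.
have dim_yz : (\dim y < \dim z)%N.
  case: (dimv_leqif_eq yz) => le_yz eq_yz.
  by rewrite ltn_neqAle le_yz andbT eq_yz eq_sym.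
by rewrite (leq_trans dim_y) // addnS -addSn leq_add2r.
Qed.

Lemma mobius_whitney y : y \in latt H -> mobius H y = whitney_mu y.
Proof. by move=> yL; apply: mob_aux_whitney; rewrite // addnS ltnS leq_addl. Qed.

End Whitney.

Lemma coef_XaddC_expn (R : nzRingType) m j : (('X + 1 : {poly R}) ^+ m)`_j = 'C(m, j)%:R.
Proof.
rewrite exprD1n coef_sum.
under eq_bigr => i _ do
  rewrite coefMn coefXn mulrb eq_sym (fun_if (fun x => x *+ _)) mul0rn.
rewrite -big_mkcond (big_ord1_eq _ (fun i => 'C(m, i)%:R)) ltnS.
by case: leqP => // /bin_small ->.
Qed.

Lemma coef_chiL_comp_XaddC (k : fieldType) (V : vectType k) n (H : 'I_n -> {vspace V}) j :
  (chiL H \Po ('X + 1))`_j = \sum_(x <- latt H) mobius H x * ('C(\dim x, j))%:Z.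
Proof.
rewrite /chiL raddf_sum coef_sum; apply: eq_bigr => x _.
by rewrite /= comp_polyM comp_polyC comp_Xn_poly coefCM coef_XaddC_expn natz.
Qed.

Unset Implicit Arguments.
Theorem proposition6 (k : fieldType) (V : vectType k) (n : nat)
  (H : 'I_n -> {vspace V}) (H_inj : injective H)
  (H_hyp : forall i, (\dim (H i)).+1 = \dim {:V}) (j : nat) :
  euler H j = (chiL H \Po ('X + 1))`_j.
Proof.
rewrite euler_sum_subsets coef_chiL_comp_XaddC -(sum_latt_fibres H _ xpredT).
rewrite big_seq [RHS]big_seq; apply: eq_bigr => x xL.
by rewrite (mobius_whitney H_hyp xL) mulr_suml; apply: eq_bigr => X /eqP ->.
Qed.
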